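(* Let $L>0,\alpha>0$. For any $b\in\Lambda(\alpha)$ and $\lambda>0$, $-\alpha\ge\mu(\lambda,b)\ge-\alpha-\alpha^2L^2$.
   Context: $\Lambda(\alpha)$: $b\in C^1(\mathbb R)$, $b\ge0$, $L$-periodic, $\int_0^Lb=\alpha L$. $\mu(\lambda,b)$ denotes the principal eigenvalue of $-\psi''+2\lambda\psi'-b\psi=\mu\psi$, i.e. the eigenvalue admitting a positive $L$-periodic eigenfunction $\psi$. *)

From Stdlib Require Import Reals.
From Coquelicot Require Import Coquelicot.
Open Scope R_scope.

Definition periodic (L : R) (f : R -> R) : Prop := forall x, f (x + L) = f x.

Definition C1 (f : R -> R) : Prop :=
  forall x, ex_derive f x /\ continuous (Derive f) x.

Definition in_Lambda (L alpha : R) (b : R -> R) : Prop :=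
  C1 b /\ (forall x, 0 <= b x) /\ periodic L b /\ RInt b 0 L = alpha * L.

(* mu is the principal eigenvalue of -psi'' + 2 lambda psi' - b psi = mu psi:
   it admits a positive L-periodic (twice differentiable) eigenfunction psi. *)
Definition is_principal_eigenvalue (L lambda : R) (b : R -> R) (mu : R) : Prop :=
  exists psi : R -> R,
    (forall x, ex_derive psi x) /\
    (forall x, ex_derive (Derive psi) x) /\
    periodic L psi /\
    (forall x, 0 < psi x) /\
    (forall x, - Derive (Derive psi) x + 2 * lambda * Derive psi x - b x * psi x
               = mu * psi x).

From Stdlib Require Import Reals Lra Psatz ZArith.
From Coquelicot Require Import Coquelicot.
Open Scope R_scope.

(* Writing w = psi'/psi, the eigenvalue equation becomes the Riccati equation
   w' = 2 lambda w - b - mu - w^2 for the L-periodic function w.  At the extrema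
   of w it gives -w^2 + 2 lambda w - mu = b >= 0, so by concavity this quadratic
   is nonnegative all along w; hence w + int_0^x b is nondecreasing and the
   oscillation of w is at most int_0^L b = alpha L.  As w vanishes where psi is
   maximal, |w| <= alpha L.  Integrating the Riccati equation over a period,
   where int w = int (ln psi)' = 0, yields mu L = - alpha L - int_0^L w^2, and
   0 <= w^2 <= alpha^2 L^2 gives both bounds. *)

Lemma is_derive_continuity_pt (f : R -> R) x l :
  is_derive f x l -> continuity_pt f x.
Proof.
  intro Hf; apply continuity_pt_filterlim.
  apply (ex_derive_continuous (K := R_AbsRing) (V := R_NormedModule)).
  now exists l.
Qed.

Lemma MVT_closed (f df : R -> R) a c : a <= c ->
  (forall x, is_derive f x (df x)) ->
  exists z, a <= z <= c /\ f c - f a = df z * (c - a).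
Proof.
  intros Hac Hf.
  destruct (MVT_gen f a c df) as [z [Hz E]].
  - now intros x _.
  - intros x _; exact (is_derive_continuity_pt f x (df x) (Hf x)).
  - rewrite Rmin_left, Rmax_right in Hz by lra; now exists z.
Qed.

Lemma increment_lower_bound (f df : R -> R) a c k : a <= c ->
  (forall x, is_derive f x (df x)) -> (forall x, a <= x <= c -> k <= df x) ->
  k * (c - a) <= f c - f a.
Proof.
  intros Hac Hf Hk; destruct (MVT_closed f df a c Hac Hf) as [z [Hz ->]].
  specialize (Hk z Hz); nra.
Qed.

Lemma increment_upper_bound (f df : R -> R) a c k : a <= c ->
  (forall x, is_derive f x (df x)) -> (forall x, a <= x <= c -> df x <= k) ->
  f c - f a <= k * (c - a).
Proof.
  intros Hac Hf Hk; destruct (MVT_closed f df a c Hac Hf) as [z [Hz ->]].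
  specialize (Hk z Hz); nra.
Qed.

Lemma is_derive_max_eq0 (f : R -> R) c l :
  (forall x, f x <= f c) -> is_derive f c l -> l = 0.
Proof.
  intros Hmax Hf.
  assert (pr : derivable_pt f c) by (exists l; now apply is_derive_Reals).
  rewrite <- (derive_pt_eq_0 f c l pr) by now apply is_derive_Reals.
  apply (deriv_maximum f (c - 1) (c + 1)); [lra | lra | intros; apply Hmax].
Qed.

Lemma is_derive_min_eq0 (f : R -> R) c l :
  (forall x, f c <= f x) -> is_derive f c l -> l = 0.
Proof.
  intros Hmin Hf.
  enough (- l = 0) by lra.
  apply (is_derive_max_eq0 (fun x => - f x) c).
  - intro x; specialize (Hmin x); lra.
  - now apply (is_derive_opp (K := R_AbsRing) (V := R_NormedModule)).
Qed.

Lemma is_derive_RInt_continuous (f : R -> R) a x :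
  (forall y, continuous f y) -> is_derive (fun y => RInt f a y) x (f x).
Proof.
  intro Hf; apply (is_derive_RInt f _ a); [|apply Hf].
  apply filter_forall; intro y.
  apply (RInt_correct (V := R_CompleteNormedModule)).
  apply (ex_RInt_continuous (V := R_CompleteNormedModule)); intros; apply Hf.
Qed.

Section Periodic.

Variables (L : R) (f : R -> R).
Hypothesis L_gt0 : 0 < L.
Hypothesis f_periodic : periodic L f.

Lemma periodic_shift (k : Z) x : f (x + IZR k * L) = f x.
Proof.
  revert x; induction k as [|k IHk|k IHk] using Z.peano_ind; intro x.
  - f_equal; ring.
  - rewrite <- (IHk x), <- (f_periodic (x + IZR k * L)), succ_IZR; f_equal; ring.
  - rewrite <- (IHk x), <- (f_periodic (x + IZR (Z.pred k) * L)).
    rewrite <- Z.sub_1_r, minus_IZR; f_equal; ring.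
Qed.

Lemma periodic_reduce x : exists y, 0 <= y <= L /\ f x = f y.
Proof.
  pose proof (Zfloor_bound (x / L)) as Hk.
  set (k := IZR (Zfloor (x / L))) in Hk.
  exists (x - k * L); split.
  - assert (k * L <= x / L * L < (k + 1) * L) by (split; nra).
    replace (x / L * L) with x in * by (field; lra); lra.
  - rewrite <- (periodic_shift (Zfloor (x / L)) (x - k * L)); f_equal; unfold k; ring.
Qed.

Lemma periodic_continuous_max :
  (forall x, continuity_pt f x) -> exists c, forall x, f x <= f c.
Proof.
  intro Hf.
  destruct (continuity_ab_maj f 0 L) as [c [Hc _]]; [lra | intros; apply Hf |].
  exists c; intro x.
  destruct (periodic_reduce x) as [y [Hy ->]]; now apply Hc.
Qed.

Lemma periodic_continuous_min :
  (forall x, continuity_pt f x) -> exists c, forall x, f c <= f x.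
Proof.
  intro Hf.
  destruct (continuity_ab_min f 0 L) as [c [Hc _]]; [lra | intros; apply Hf |].
  exists c; intro x.
  destruct (periodic_reduce x) as [y [Hy ->]]; now apply Hc.
Qed.

Hypothesis f_derivable : forall x, ex_derive f x.

Lemma periodic_Derive : periodic L (Derive f).
Proof.
  intro x.
  assert (Hshift : is_derive (fun y => f (y + L)) x (Derive f (x + L))).
  { replace (Derive f (x + L)) with (scal 1 (Derive f (x + L)))
      by (unfold scal; simpl; unfold mult; simpl; ring).
    apply (is_derive_comp f (fun y => y + L)).
    - apply Derive_correct, f_derivable.
    - auto_derive; auto; ring. }
  rewrite <- (is_derive_unique _ _ _ Hshift).
  apply Derive_ext; intro y; apply f_periodic.
Qed.

Lemma periodic_Derive_root : exists c, Derive f c = 0.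
Proof.
  destruct periodic_continuous_max as [c Hc].
  { intro x; apply (is_derive_continuity_pt f x (Derive f x)), Derive_correct, f_derivable. }
  exists c; apply (is_derive_max_eq0 f c _ Hc), Derive_correct, f_derivable.
Qed.

End Periodic.

Lemma quadratic_nonneg_between (lam mu m M t : R) : m <= t <= M ->
  0 <= - m ^ 2 + 2 * lam * m - mu -> 0 <= - M ^ 2 + 2 * lam * M - mu ->
  0 <= - t ^ 2 + 2 * lam * t - mu.
Proof.
  intros Ht Hm HM.
  (* the quadratic exceeds its chord through m and M by (t - m) (M - t) *)
  assert (Hchord : (M - m) * (- t ^ 2 + 2 * lam * t - mu) =
    (- m ^ 2 + 2 * lam * m - mu) * (M - t) + (- M ^ 2 + 2 * lam * M - mu) * (t - m)
    + (M - m) * (t - m) * (M - t)) by ring.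
  destruct (Rle_lt_or_eq_dec m M ltac:(lra)) as [Hlt|Heq].
  - assert (0 <= (M - m) * (- t ^ 2 + 2 * lam * t - mu)).
    { rewrite Hchord.
      assert (0 <= (t - m) * (M - t)) by nra.
      assert (0 <= (- m ^ 2 + 2 * lam * m - mu) * (M - t)) by nra.
      assert (0 <= (- M ^ 2 + 2 * lam * M - mu) * (t - m)) by nra.
      nra. }
    nra.
  - replace t with m by lra; exact Hm.
Qed.

Definition log_derivative (f : R -> R) (x : R) : R := Derive f x / f x.

Lemma is_derive_ln_comp (f : R -> R) x : 0 < f x -> ex_derive f x ->
  is_derive (fun y => ln (f y)) x (log_derivative f x).
Proof.
  intros Hfx Hf.
  replace (log_derivative f x) with (scal (Derive f x) (/ f x)).
  - apply (is_derive_comp ln f); [now apply is_derive_ln | now apply Derive_correct].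
  - unfold log_derivative, scal; simpl; unfold mult; simpl; field; lra.
Qed.

Section PrincipalEigenfunction.

Variables (L lam mu : R) (b psi : R -> R).
Hypothesis L_gt0 : 0 < L.
Hypothesis b_continuous : forall x, continuous b x.
Hypothesis b_ge0 : forall x, 0 <= b x.
Hypothesis psi_derivable : forall x, ex_derive psi x.
Hypothesis psi'_derivable : forall x, ex_derive (Derive psi) x.
Hypothesis psi_periodic : periodic L psi.
Hypothesis psi_gt0 : forall x, 0 < psi x.
Hypothesis psi_eigen : forall x,
  - Derive (Derive psi) x + 2 * lam * Derive psi x - b x * psi x = mu * psi x.

Let w := log_derivative psi.
Let B := RInt b 0.

Lemma log_derivative_riccati x :
  is_derive w x (2 * lam * w x - b x - mu - w x ^ 2).
Proof.
  assert (Hpsi : psi x <> 0) by (specialize (psi_gt0 x); lra).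
  replace (2 * lam * w x - b x - mu - w x ^ 2) with
    ((Derive (Derive psi) x * psi x - Derive psi x * Derive psi x) / psi x ^ 2).
  - apply is_derive_div; auto; apply Derive_correct; auto.
  - unfold w, log_derivative; specialize (psi_eigen x).
    replace (Derive (Derive psi) x) with
      (2 * lam * Derive psi x - b x * psi x - mu * psi x) by lra.
    field; auto.
Qed.

Lemma log_derivative_periodic : periodic L w.
Proof.
  intro x; unfold w, log_derivative.
  now rewrite (periodic_Derive L psi psi_periodic psi_derivable), psi_periodic.
Qed.

Lemma log_derivative_quadratic_nonneg x : 0 <= - w x ^ 2 + 2 * lam * w x - mu.
Proof.
  assert (Hcont : forall y, continuity_pt w y).
  { intro y; exact (is_derive_continuity_pt _ _ _ (log_derivative_riccati y)). }
  destruct (periodic_continuous_max L w L_gt0 log_derivative_periodic Hcont)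
    as [cM HcM].
  destruct (periodic_continuous_min L w L_gt0 log_derivative_periodic Hcont)
    as [cm Hcm].
  (* at an extremum of w the Riccati equation reads q(w) = b >= 0 *)
  pose proof (is_derive_max_eq0 w cM _ HcM (log_derivative_riccati cM)).
  pose proof (is_derive_min_eq0 w cm _ Hcm (log_derivative_riccati cm)).
  pose proof (b_ge0 cM); pose proof (b_ge0 cm).
  apply (quadratic_nonneg_between lam mu (w cm) (w cM)); auto; lra.
Qed.

Lemma primitive_nondecreasing x y : x <= y -> B x <= B y.
Proof.
  intro Hxy.
  enough (0 * (y - x) <= B y - B x) by lra.
  apply (increment_lower_bound B b); auto.
  intro z; now apply is_derive_RInt_continuous.
Qed.

Lemma log_derivative_plus_primitive_nondecreasing x y :
  x <= y -> w x + B x <= w y + B y.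
Proof.
  intro Hxy.
  enough (0 * (y - x) <= (w y + B y) - (w x + B x)) by lra.
  apply (increment_lower_bound (fun z => w z + B z)
    (fun z => (2 * lam * w z - b z - mu - w z ^ 2) + b z)); auto.
  - intro z; apply (is_derive_plus (K := R_AbsRing) (V := R_NormedModule)).
    + apply log_derivative_riccati.
    + now apply is_derive_RInt_continuous.
  - intros z _; pose proof (log_derivative_quadratic_nonneg z); lra.
Qed.

Lemma log_derivative_oscillation_window x y :
  0 <= x <= L -> 0 <= y <= L -> w x - w y <= B L.
Proof.
  intros Hx Hy.
  assert (B0 : B 0 = 0) by (unfold B; rewrite RInt_point; reflexivity).
  destruct (Rle_lt_dec x y) as [Hxy|Hyx].
  - pose proof (log_derivative_plus_primitive_nondecreasing x y Hxy).
    pose proof (primitive_nondecreasing 0 x ltac:(lra)).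
    pose proof (primitive_nondecreasing y L ltac:(lra)).
    lra.
  - assert (HwL : w L = w 0) by (rewrite <- (log_derivative_periodic 0); f_equal; ring).
    pose proof (log_derivative_plus_primitive_nondecreasing x L ltac:(lra)).
    pose proof (log_derivative_plus_primitive_nondecreasing 0 y ltac:(lra)).
    pose proof (primitive_nondecreasing y x ltac:(lra)).
    lra.
Qed.

Lemma log_derivative_oscillation x y : w x - w y <= B L.
Proof.
  destruct (periodic_reduce L w L_gt0 log_derivative_periodic x) as [x' [Hx' ->]].
  destruct (periodic_reduce L w L_gt0 log_derivative_periodic y) as [y' [Hy' ->]].
  now apply log_derivative_oscillation_window.
Qed.

Lemma log_derivative_sqr_bound x : w x ^ 2 <= B L ^ 2.
Proof.
  destruct (periodic_Derive_root L psi L_gt0 psi_periodic psi_derivable) as [c Hc].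
  assert (Hwc : w c = 0) by (unfold w, log_derivative; rewrite Hc; unfold Rdiv; ring).
  pose proof (log_derivative_oscillation x c).
  pose proof (log_derivative_oscillation c x).
  nra.
Qed.

(* A primitive of -w^2, read off the Riccati equation using w = (ln psi)'. *)
Let Phi x := w x - 2 * lam * ln (psi x) + B x + mu * x.

Lemma is_derive_Phi x : is_derive Phi x (- w x ^ 2).
Proof.
  replace (- w x ^ 2) with
    ((2 * lam * w x - b x - mu - w x ^ 2) - 2 * lam * w x + b x + mu * 1) by ring.
  apply (is_derive_plus (K := R_AbsRing) (V := R_NormedModule)).
  apply (is_derive_plus (K := R_AbsRing) (V := R_NormedModule)).
  apply (is_derive_minus (K := R_AbsRing) (V := R_NormedModule)).
  - apply log_derivative_riccati.
  - apply (is_derive_scal (fun y => ln (psi y))), is_derive_ln_comp; auto.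
  - now apply is_derive_RInt_continuous.
  - apply (is_derive_scal (fun y => y)), (is_derive_id (K := R_AbsRing)).
Qed.

Lemma principal_eigenvalue_integral_bounds :
  - B L ^ 2 * L <= B L + mu * L <= 0.
Proof.
  assert (Hincr : Phi L - Phi 0 = B L + mu * L).
  { assert (HB0 : B 0 = 0) by (unfold B; rewrite RInt_point; reflexivity).
    assert (HwL : w L = w 0) by (rewrite <- (log_derivative_periodic 0); f_equal; ring).
    assert (HpsiL : psi L = psi 0) by (rewrite <- (psi_periodic 0); f_equal; ring).
    unfold Phi; rewrite HB0, HwL, HpsiL; ring. }
  rewrite <- Hincr; split.
  - enough (- B L ^ 2 * (L - 0) <= Phi L - Phi 0) by lra.
    apply (increment_lower_bound Phi (fun x => - w x ^ 2)); [lra | apply is_derive_Phi |].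
    intros x _; pose proof (log_derivative_sqr_bound x); lra.
  - enough (Phi L - Phi 0 <= 0 * (L - 0)) by lra.
    apply (increment_upper_bound Phi (fun x => - w x ^ 2)); [lra | apply is_derive_Phi |].
    intros x _; pose proof (pow2_ge_0 (w x)); lra.
Qed.

End PrincipalEigenfunction.

Theorem mainTheorem16 :
  forall (L alpha : R) (b : R -> R) (lambda mu : R),
    0 < L -> 0 < alpha ->
    in_Lambda L alpha b -> 0 < lambda ->
    is_principal_eigenvalue L lambda b mu ->
    - alpha >= mu /\ mu >= - alpha - alpha ^ 2 * L ^ 2.
Proof.
  intros L alpha b lambda mu HL _ [Hb1 [Hb0 [_ Hint]]] _
    [psi [Hpsi1 [Hpsi2 [Hper [Hpos Heigen]]]]].
  assert (Hbcont : forall x, continuous b x).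
  { intro x; apply (ex_derive_continuous (K := R_AbsRing) (V := R_NormedModule)).
    apply Hb1. }
  pose proof (principal_eigenvalue_integral_bounds L lambda mu b psi HL Hbcont Hb0
    Hpsi1 Hpsi2 Hper Hpos Heigen) as Hbounds.
  rewrite Hint in Hbounds.
  assert (Hupper : (alpha + mu) * L <= 0) by lra.
  assert (Hlower : 0 <= (alpha + mu + alpha ^ 2 * L ^ 2) * L) by nra.
  split; apply Rle_ge; nra.
Qed.
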